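(* For every $n\ge0$, $\bigcap_{k=0}^\infty\mathcal L^{(n)}_k=\bigcap_{k=0}^\infty\mathcal G^{(n)}_k$.
   Context: Fix a prime $p$ and an embedding $\bar{\mathbb Q}\subset\mathbb C$; put $\xi_{p^n}=\exp(2\pi i/p^n)$ and $G_K=\mathrm{Gal}(\bar{\mathbb Q}/K)$. For $n\ge0$ let $V_n=\mathbb P^1_{\bar{\mathbb Q}}\setminus(\{0,\infty\}\cup\mu_{p^n})$ and let $\pi_1(V_n,\vec{01})$ be its pro-$p$ étale fundamental group based at the tangential base point $\vec{01}$; $G_{\mathbb Q}$ acts on it and on torsors of étale paths. It is free pro-$p$ on $x_n$ (standard loop around $0$) and $y_{k,n}$, $0\le k<p^n$ (standard loop around $\xi_{p^n}^k$). For an étale path $\gamma$ from $a$ to $b$ put $\mathfrak f_\gamma(\sigma)=\gamma^{-1}\cdot\sigma(\gamma)\in\pi_1(V_n,a)$, where $\beta\cdot\alpha$ means $\alpha$ followed by $\beta$. Let $\pi_n$ be the path from $\vec{01}$ to $\frac1{p^n}\vec{10}$ given by the real interval $[0,1]$. Let $\mathbb Q_p\{\{\mathcal Y_n\}\}$ be the algebra of noncommutative formal power series in $X_n,Y_{0,n},\dots,Y_{p^n-1,n}$ (indices of $Y_{i,n}$ read modulo $p^n$), $\mathcal M_n$ the set of nonempty monomials in these variables, $\deg w$ the total degree and $\deg_{\mathcal Y}w$ the degree in the variables $Y_{i,n}$, and $E_n:\pi_1(V_n,\vec{01})\to\mathbb Q_p\{\{\mathcal Y_n\}\}$ the continuous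 multiplicative map with $E_n(x_n)=\exp X_n$, $E_n(y_{k,n})=\exp Y_{k,n}$. For $\sigma\in G_{\mathbb Q}$ define $\lambda^{(n)}_w(\sigma)$ by $E_n(\mathfrak f_{\pi_n}(\sigma))=1+\sum_{w\in\mathcal M_n}\lambda^{(n)}_w(\sigma)w$. Depth filtration: $\mathcal L^{(n)}_0=G_{\mathbb Q(\mu_{p^\infty})}$ and for $k\ge1$, $\mathcal L^{(n)}_k=\{\sigma\in G_{\mathbb Q(\mu_{p^\infty})}:\ \lambda^{(n)}_w(\sigma)=0\text{ for all }w\in\mathcal M_n\text{ with }\deg_{\mathcal Y}w\le k\}$. Weight filtration: $\mathcal G^{(n)}_0=G_{\mathbb Q(\mu_{p^\infty})}$ and for $k\ge1$, $\mathcal G^{(n)}_k=\{\sigma\in\mathcal G^{(n)}_{k-1}:\ \lambda^{(n)}_w(\sigma)=0\text{ for all }w\in\mathcal M_n\text{ with }\deg w=k\}$. *)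

From mathcomp Require Import all_boot all_order all_algebra.
Set Implicit Arguments. Unset Strict Implicit. Unset Printing Implicit Defensive.

(* Variables of Q_p{{Y_n}}: [None] is X_n, [Some i] is Y_{i,n}, i < p^n. *)
Definition letter (p n : nat) := option 'I_(p ^ n).

(* Monomials are words in the letters; the nonempty ones form M_n. *)
Definition is_monomial (p n : nat) (w : seq (letter p n)) : bool := 0 < size w.
Definition deg (p n : nat) (w : seq (letter p n)) : nat := size w.
Definition degY (p n : nat) (w : seq (letter p n)) : nat :=
  count (fun a : letter p n => a != None) w.

(* Abstract data: a type Gal of Galois elements (G_Q), the subset Hcyc
   (= G_{Q(mu_{p^infty})}), and the coefficient function
   lam sigma w = lambda^{(n)}_w(sigma) with values in a ring K (Q_p). *)

Definition depthL (Gal : Type) (Hcyc : Gal -> Prop) (K : nzRingType) (p n : nat)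
  (lam : Gal -> seq (letter p n) -> K) (k : nat) (s : Gal) : Prop :=
  Hcyc s /\ (0 < k -> forall w, is_monomial w -> degY w <= k -> lam s w = 0%R).

Fixpoint weightG (Gal : Type) (Hcyc : Gal -> Prop) (K : nzRingType) (p n : nat)
  (lam : Gal -> seq (letter p n) -> K) (k : nat) (s : Gal) : Prop :=
  match k with
  | 0 => Hcyc s
  | k'.+1 => weightG Hcyc lam k' s /\
             (forall w, is_monomial w -> deg w = k'.+1 -> lam s w = 0%R)
  end.

From mathcomp Require Import all_boot all_order all_algebra.

Set Implicit Arguments.
Unset Strict Implicit.
Unset Printing Implicit Defensive.

(* Since [degY w <= deg w], both filtrations eventually impose the vanishing
   of the coefficient of every monomial, so each intersection consists of the
   elements of [Hcyc] all of whose coefficients vanish. *)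

Section Filtrations.

Variables (Gal : Type) (Hcyc : Gal -> Prop) (K : nzRingType) (p n : nat).
Variable lam : Gal -> seq (letter p n) -> K.

Lemma weightGE k s :
  weightG Hcyc lam k s <->
  Hcyc s /\ forall w, is_monomial w -> deg w <= k -> lam s w = 0%R.
Proof.
elim: k => [|k IH] /=.
  by split=> [Hs|[]//]; split=> // w; rewrite /is_monomial /deg leqn0 => /lt0n_neq0/negPf->.
split=> [[/IH [Hs Hw] Hk]|[Hs Hw]].
  by split=> // w wM; rewrite leq_eqVlt => /predU1P [/Hk|/Hw]; apply.
split; last by move=> w wM wk; apply: Hw; rewrite // wk.
by apply/IH; split=> // w wM wk; apply: Hw; rewrite // ltnW.
Qed.

Definition kills_all_monomials (s : Gal) : Prop :=
  Hcyc s /\ forall w, is_monomial w -> lam s w = 0%R.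

Lemma bigcap_depthLE s :
  (forall k, depthL Hcyc lam k s) <-> kills_all_monomials s.
Proof.
split=> [L|[Hs Hw] k]; last by split=> // _ w wM _; apply: Hw.
split=> [|w wM]; first by case: (L 0).
by case: (L (deg w)) => _; apply=> //; rewrite /degY count_size.
Qed.

Lemma bigcap_weightGE s :
  (forall k, weightG Hcyc lam k s) <-> kills_all_monomials s.
Proof.
split=> [G|[Hs Hw] k]; last by apply/weightGE; split=> // w wM _; apply: Hw.
split=> [|w wM]; first exact: (G 0).
by have /weightGE [_] := G (deg w); apply.
Qed.

End Filtrations.

Theorem lemma3p3 (p : nat) (hp : prime p) (n : nat)
  (Gal : Type) (Hcyc : Gal -> Prop) (K : nzRingType)
  (lam : Gal -> seq (letter p n) -> K) :
  forall s : Gal,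
    (forall k : nat, depthL Hcyc lam k s) <-> (forall k : nat, weightG Hcyc lam k s).
Proof.
move=> s; exact: iff_trans (bigcap_depthLE Hcyc lam s) (iff_sym (bigcap_weightGE Hcyc lam s)).
Qed.
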